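(* Let $D$ be a Dyck shape of length $2n$ and $1\leq i\leq n+1$. Then there is a unique way to add to $D$ a ribbon (i.e., a unique Dyck shape $E$ of length $2n+2$ with $D\subset E$ and $E/D$ a ribbon) such that the number of South-West–to–North-East diagonals met by the ribbon $E/D$ is $i$.
   Context: The staircase partition of size $n$ is $\delta_n=(n,n-1,\dots,1)$. A Dyck shape of length $2n$ is a skew shape $\delta_n/\lambda$ where $\lambda$ is a Young diagram with $\lambda\subset\delta_{n-1}$. It is drawn in ''Japanese notation'': the French-convention Young diagram rotated by 135 degrees clockwise, so that the upper border of a Dyck shape of length $2n$ traces a Dyck path of length $2n$ (steps $\nearrow=(1,1)$, $\searrow=(1,-1)$ from $(0,0)$ to $(2n,0)$ staying at nonnegative height), and the cells are unit squares standing on a corner. In this picture the cells lie along two families of diagonals: the South-East to North-West diagonals (whose cell counts are the parts of $\lambda$'s complement structure) and the South-West to North-East diagonals. A skew shape is a ribbon if it is connected and contains no $2\times 2$ square. For Dyck shapes $D$, $E$ of lengths $2n$ and $2n+2$, arranged so that their leftmost cells coincide, one writes $D\sqsubset E$ (''$E$ is obtained from $D$ by addition of a ribbon'') if $D\subset E$ and $E/D$ is a ribbon. Equivalently, in terms of words over $\{\nearrow,\searrow\}$, $D\sqsubset E$ iff $E$ is obtained from $D\searrow\searrow$ by changing one $\searrow$ (any except the last one) into $\nearrow$, giving $n+1$ possibilities. *)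

From mathcomp Require Import all_boot.
Set Implicit Arguments. Unset Strict Implicit. Unset Printing Implicit Defensive.

(* A cell (r, c) of a Young diagram: row r, column c (0-based, French
   convention: row 0 at the bottom).  *)
Definition cell := (nat * nat)%type.

Definition is_partition (l : seq nat) : bool :=
  sorted geq l && all (fun x => 0 < x) l.

Definition sub_staircase (m : nat) (l : seq nat) : bool :=
  all (fun r => nth 0 l r <= m - r) (iota 0 (size l)).

(* l is the inner partition of a Dyck shape delta_n / l of length 2n,
   i.e. l is a partition with l inside delta_(n-1). *)
Definition dyck_shape (n : nat) (l : seq nat) : bool :=
  is_partition l && sub_staircase n.-1 l.

Definition skew_cells (n : nat) (l : seq nat) : pred cell :=
  fun x => (x.1 + x.2 < n) && (nth 0 l x.1 <= x.2).

(* The cells of delta_n / l placed inside delta_(n+1) so that the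
   leftmost cells coincide (in Japanese notation the leftmost cell of
   delta_n is (0, n-1), that of delta_(n+1) is (0, n): shift by one column). *)
Definition shifted_cells (n : nat) (l : seq nat) : pred cell :=
  fun x => (0 < x.2) && skew_cells n l (x.1, x.2.-1).

Definition adj_cell : rel cell :=
  fun x y => ((x.1 == y.1) && ((x.2.+1 == y.2) || (y.2.+1 == x.2)))
          || ((x.2 == y.2) && ((x.1.+1 == y.1) || (y.1.+1 == x.1))).

Definition cells_connected (S : pred cell) : Prop :=
  forall x y, S x -> S y ->
    exists p : seq cell, [/\ path adj_cell x p, last x p = y & all S p].

Definition no_2x2_square (S : pred cell) : Prop :=
  forall r c, ~~ [&& S (r, c), S (r.+1, c), S (r, c.+1) & S (r.+1, c.+1)].

Definition is_ribbon (S : pred cell) : Prop :=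
  (exists x, S x) /\ cells_connected S /\ no_2x2_square S.

(* Cells of E / D, with D = delta_n / l and E = delta_(n+1) / mu,
   leftmost cells aligned. *)
Definition ribbon_cells (n : nat) (l mu : seq nat) : pred cell :=
  fun x => skew_cells n.+1 mu x && ~~ shifted_cells n l x.

Definition ribbon_addition (n : nat) (l mu : seq nat) : Prop :=
  (forall x, shifted_cells n l x -> skew_cells n.+1 mu x)
  /\ is_ribbon (ribbon_cells n l mu).

(* In Japanese notation (French diagram rotated 135 degrees
   clockwise) the rows of the diagram are the SW-NE diagonals; all cells of
   delta_N have row and column < N. *)
Definition sw_ne_diagonals_met (N : nat) (S : pred cell) : nat :=
  count (fun r => has (fun c => S (r, c)) (iota 0 N)) (iota 0 N).

From mathcomp Require Import all_boot.
Set Warnings "-notation-overridden".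
From mathcomp Require Import zify.
Set Implicit Arguments. Unset Strict Implicit.

(* With D = delta_n / lam and E = delta_(n+1) / mu, row r of the ribbon E / D
   is the interval [mu_r, lam_r], so the ribbon meets row r iff
   mu_r <= lam_r.  Containment gives mu_r <= lam_r + 1.  If the ribbon meets
   a row r < n, a path inside it from that row to its last cell (n, 0)
   must step up from row r to row r + 1, and together with the absence of
   2x2 squares this forces mu_r = lam_(r+1) and that row r + 1 is met too.
   Hence the rows met are exactly k, ..., n for some k, and mu is determined
   by k; conversely every k <= n gives a ribbon, and it meets n + 1 - k
   diagonals. *)

Section DyckShape.

Variables (n : nat) (l : seq nat).
Hypothesis dyck_l : dyck_shape n l.

Lemma dyck_shape_nonincr j : nth 0 l j.+1 <= nth 0 l j.
Proof.
case/andP: dyck_l => /andP[/sortedP sorted_l _] _.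
case: (ltnP j.+1 (size l)) => [|le_size]; first exact: sorted_l.
by rewrite nth_default.
Qed.

Lemma dyck_shape_gt0 j : j < size l -> 0 < nth 0 l j.
Proof. by case/andP: dyck_l => /andP[_ /all_nthP pos_l] _; apply: pos_l. Qed.

Lemma dyck_shape_staircase j :
  (j < n -> nth 0 l j + j < n) /\ (n.-1 <= j -> nth 0 l j = 0).
Proof.
case: (ltnP j (size l)) => [lt_j|le_j]; last by rewrite nth_default //; lia.
have /allP stair_l := proj2 (andP dyck_l).
have := stair_l j; rewrite mem_iota add0n lt_j => /(_ isT).
by have := dyck_shape_gt0 lt_j; split=> ?; lia.
Qed.

Lemma dyck_shape_bound j : j < n -> nth 0 l j + j < n.
Proof. exact: (proj1 (dyck_shape_staircase j)). Qed.

Lemma dyck_shape_nth0 j : n.-1 <= j -> nth 0 l j = 0.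
Proof. exact: (proj2 (dyck_shape_staircase j)). Qed.

End DyckShape.

Lemma dyck_shape_eq m (s t : seq nat) : dyck_shape m s -> dyck_shape m t ->
  (forall r, nth 0 s r = nth 0 t r) -> s = t.
Proof.
move=> ds dt eq_st.
have size_st : size s = size t.
  case: (ltngtP (size s) (size t)) => // lt_st.
  - by have := dyck_shape_gt0 dt lt_st; rewrite -eq_st nth_default.
  - by have := dyck_shape_gt0 ds lt_st; rewrite eq_st nth_default.
by apply: (eq_from_nth (x0 := 0)) size_st _ => r _.
Qed.

Lemma count_iota_geq k m : k <= m -> count (leq k) (iota 0 m) = m - k.
Proof.
move=> le_km; rewrite -{1}(subnKC le_km) iotaD count_cat add0n.
rewrite (@eq_in_count _ _ pred0); last by move=> r; rewrite mem_iota /=; lia.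
rewrite (@eq_in_count _ _ predT (iota k _)); last first.
  by move=> r; rewrite mem_iota /=; lia.
by rewrite count_pred0 count_predT size_iota.
Qed.

Section RibbonRows.

Variables (n : nat) (lam mu : seq nat).
Hypothesis dyck_lam : dyck_shape n lam.

Lemma ribbon_cellsE r c :
  ribbon_cells n lam mu (r, c) = (r <= n) && (nth 0 mu r <= c <= nth 0 lam r).
Proof.
have lam_n := dyck_shape_nth0 dyck_lam (leq_pred n).
rewrite /ribbon_cells /shifted_cells /skew_cells /=.
case: (ltngtP r n) => [lt_rn|lt_nr|->]; last first.
- by rewrite lam_n; case: c => [|c] /=; rewrite ?addn0 ?ltnSn //= andbF; lia.
- by have -> : (r + c < n.+1) = false by lia.
have := dyck_shape_bound dyck_lam lt_rn.
by case: c => [|c] /=; case: (leqP (nth 0 mu r)) => /=; lia.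
Qed.

Lemma sw_ne_diagonals_met_ribbon :
  sw_ne_diagonals_met n.+1 (ribbon_cells n lam mu) =
  count (fun r => nth 0 mu r <= nth 0 lam r) (iota 0 n.+1).
Proof.
apply: eq_in_count => r; rewrite mem_iota add0n => /andP[_ le_rn].
apply/hasP/idP => [[c _]|met]; first by rewrite ribbon_cellsE; lia.
exists (nth 0 mu r); last by rewrite ribbon_cellsE; lia.
rewrite mem_iota add0n /=.
case: (ltnP r n) => [lt_rn|le_nr]; first by have := dyck_shape_bound dyck_lam lt_rn; lia.
by move: met; rewrite (dyck_shape_nth0 dyck_lam) //; lia.
Qed.

End RibbonRows.

Definition reach (S : pred cell) (x y : cell) : Prop :=
  exists p : seq cell, [/\ path adj_cell x p, last x p = y & all S p].

Lemma adj_cell_sym x y : adj_cell x y -> adj_cell y x.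
Proof. by case: x y => [a b] [c d]; rewrite /adj_cell /=; lia. Qed.

Lemma reach_refl (S : pred cell) x : reach S x x.
Proof. by exists [::]. Qed.

Lemma reach_trans (S : pred cell) x y z : reach S x y -> reach S y z -> reach S x z.
Proof.
case=> p [xp <- Sp] [q [yq <- Sq]]; exists (p ++ q).
by rewrite cat_path last_cat xp yq all_cat Sp Sq.
Qed.

Lemma reach_cons (S : pred cell) x y z :
  S y -> adj_cell x y -> reach S y z -> reach S x z.
Proof. by move=> Sy xy [p [yp <- Sp]]; exists (y :: p); rewrite /= xy yp Sy Sp. Qed.

Lemma reach_sym (S : pred cell) x y : S x -> reach S x y -> reach S y x.
Proof.
move=> Sx [p [xp <- Sp]]; elim: p x Sx xp Sp => [|z p IHp] x Sx /=.
  by move=> _ _; apply: reach_refl.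
case/andP=> xz zp /andP[Sz Sp]; apply: reach_trans (IHp z Sz zp Sp) _.
by apply: reach_cons (reach_refl _ _) => //; apply: adj_cell_sym.
Qed.

Lemma reach_row_left (S : pred cell) r a b :
  a <= b -> (forall c, a <= c <= b -> S (r, c)) -> reach S (r, b) (r, a).
Proof.
elim: b => [|b IHb] le_ab Srow.
  by rewrite (_ : a = 0); [apply: reach_refl | lia].
case: (ltnP a b.+1) => [lt_ab|le_ba]; last first.
  by rewrite (_ : a = b.+1); [apply: reach_refl | lia].
apply: (@reach_cons _ _ (r, b)); first (by apply: Srow; lia); last first.
  by apply: IHb => [|c ?]; [lia | apply: Srow; lia].
by rewrite /adj_cell /=; lia.
Qed.

Lemma path_cross_row (S : pred cell) r x p :
  path adj_cell x p -> S x -> all S p -> x.1 <= r -> r < (last x p).1 ->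
  exists c, S (r, c) && S (r.+1, c).
Proof.
elim: p x => [|z p IHp] x /=; first by move=> _ _ _; lia.
case/andP=> xz zp Sx /andP[Sz Sp] le_xr lt_r.
case: (leqP z.1 r) => [le_zr|lt_rz]; first exact: (IHp z zp Sz Sp le_zr lt_r).
have [-> z1 z2] : [/\ r = x.1, z.1 = r.+1 & z.2 = x.2].
  by move: xz; rewrite /adj_cell => xz; split; lia.
by exists x.2; rewrite -surjective_pairing Sx -z1 -z2 -surjective_pairing.
Qed.

(* Rows below k move one column right; from row k on, row r of E starts
   where row r + 1 of D ends. *)
Definition add_ribbon (lam : seq nat) (k : nat) : seq nat :=
  mkseq (fun r => (nth 0 lam r).+1) k ++ drop k.+1 lam.

Lemma nth_add_ribbon lam k r :
  nth 0 (add_ribbon lam k) r = if r < k then (nth 0 lam r).+1 else nth 0 lam r.+1.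
Proof.
rewrite /add_ribbon nth_cat size_mkseq; case: ifP => lt_rk; first by rewrite nth_mkseq.
by rewrite nth_drop; congr nth; lia.
Qed.

Section AddRibbon.

Variables (n : nat) (lam : seq nat) (k : nat).
Hypotheses (dyck_lam : dyck_shape n lam) (le_kn : k <= n).

Let lam_nonincr := dyck_shape_nonincr dyck_lam.
Let lam_bound := dyck_shape_bound dyck_lam.
Let lam_nth0 := dyck_shape_nth0 dyck_lam.

Lemma add_ribbon_dyck : dyck_shape n.+1 (add_ribbon lam k).
Proof.
apply/andP; split; [apply/andP; split|].
- apply/(sortedP 0) => j _; rewrite /= !nth_add_ribbon.
  have := lam_nonincr j; have := lam_nonincr j.+1.
  by case: (ltnP j k); case: (ltnP j.+1 k); lia.
- apply/(all_nthP 0) => j; rewrite /add_ribbon size_cat size_mkseq size_drop.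
  rewrite nth_add_ribbon => lt_j; case: (ltnP j k) => // le_kj.
  by apply: (dyck_shape_gt0 dyck_lam); lia.
- apply/allP => j; rewrite mem_iota add0n => /andP[_ _] /=; rewrite nth_add_ribbon.
  case: (ltnP j k) => [lt_jk|le_kj]; first by have := lam_bound (leq_trans lt_jk le_kn); lia.
  case: (ltnP j.+1 n) => [lt_jn|le_nj]; first by have := lam_bound lt_jn; lia.
  by rewrite lam_nth0 //; lia.
Qed.

Lemma add_ribbon_cellsE r c : ribbon_cells n lam (add_ribbon lam k) (r, c) =
  [&& k <= r, r <= n & nth 0 lam r.+1 <= c <= nth 0 lam r].
Proof.
rewrite ribbon_cellsE // nth_add_ribbon.
by case: (ltnP r k); lia.
Qed.

Lemma reach_add_ribbon_corner x :
  ribbon_cells n lam (add_ribbon lam k) x ->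
  reach (ribbon_cells n lam (add_ribbon lam k)) x (n, 0).
Proof.
case: x => r c Sx.
have [d] : exists d, r + d = n by move: Sx; rewrite add_ribbon_cellsE => ?; exists (n - r); lia.
elim: d r c Sx => [|d IHd] r c; rewrite add_ribbon_cellsE.
  rewrite addn0 => Sx r_n; subst r; move: Sx; rewrite (lam_nth0 (leq_pred n)).
  by move=> Sx; rewrite (_ : c = 0); [apply: reach_refl | lia].
move=> Sx rd_n; have lam_r := lam_nonincr r.+1.
apply: (@reach_trans _ _ (r, nth 0 lam r.+1)).
  by apply: reach_row_left => [|c' ?]; rewrite ?add_ribbon_cellsE; lia.
apply: (@reach_cons _ _ (r.+1, nth 0 lam r.+1)).
- by rewrite add_ribbon_cellsE; lia.
- by rewrite /adj_cell /=; lia.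
- by apply: IHd; [rewrite add_ribbon_cellsE; lia | lia].
Qed.

Lemma add_ribbon_ribbon : ribbon_addition n lam (add_ribbon lam k).
Proof.
split; [|split; [|split]].
- case=> r c; rewrite /shifted_cells /skew_cells /= nth_add_ribbon.
  by have := lam_nonincr r; case: (ltnP r k); lia.
- exists (n, 0); rewrite add_ribbon_cellsE.
  by rewrite (lam_nth0 (j := n.+1)); lia.
- move=> x y Sx Sy; apply: reach_trans (reach_add_ribbon_corner Sx) _.
  exact: reach_sym Sy (reach_add_ribbon_corner Sy).
- move=> r c; rewrite !add_ribbon_cellsE.
  by have := lam_nonincr r; have := lam_nonincr r.+1; lia.
Qed.

Lemma sw_ne_diagonals_met_add_ribbon :
  sw_ne_diagonals_met n.+1 (ribbon_cells n lam (add_ribbon lam k)) = n.+1 - k.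
Proof.
rewrite sw_ne_diagonals_met_ribbon // -count_iota_geq //; last lia.
apply: eq_count => r; rewrite /= nth_add_ribbon.
by have := lam_nonincr r; case: (ltnP r k); lia.
Qed.

End AddRibbon.

Section RibbonAddition.

Variables (n : nat) (lam mu : seq nat).
Hypotheses (dyck_lam : dyck_shape n lam) (dyck_mu : dyck_shape n.+1 mu).
Hypothesis ribbon_mu : ribbon_addition n lam mu.

Let lam_nth0 := dyck_shape_nth0 dyck_lam.
Let mu_nth0 := dyck_shape_nth0 dyck_mu.

Lemma ribbon_addition_row_le r : r < n -> nth 0 mu r <= (nth 0 lam r).+1.
Proof.
move=> lt_rn; have lam_r := dyck_shape_bound dyck_lam lt_rn.
have := (proj1 ribbon_mu) (r, (nth 0 lam r).+1).
by rewrite /shifted_cells /skew_cells /= leqnn andbT => /(_ _)/andP[]; lia.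
Qed.

Lemma ribbon_addition_row_step r : r < n -> nth 0 mu r <= nth 0 lam r ->
  nth 0 mu r = nth 0 lam r.+1 /\ nth 0 mu r.+1 <= nth 0 lam r.+1.
Proof.
move=> lt_rn met_r; case: ribbon_mu => _ [_ [connected no_square]].
have Sr : ribbon_cells n lam mu (r, nth 0 mu r) by rewrite ribbon_cellsE //; lia.
have Sn : ribbon_cells n lam mu (n, 0).
  by rewrite ribbon_cellsE // mu_nth0 // leqnn.
have [p [rp last_p Sp]] := connected _ _ Sr Sn.
have lt_last : r < (last (r, nth 0 mu r) p).1 by rewrite last_p.
have [c] := path_cross_row rp Sr Sp (leqnn r) lt_last.
have := no_square r (nth 0 mu r); rewrite !ribbon_cellsE //.
by have := dyck_shape_nonincr dyck_lam r; have := dyck_shape_nonincr dyck_mu r; lia.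
Qed.

Lemma ribbon_addition_add_ribbon :
  exists2 k, k <= n & forall r, nth 0 mu r = nth 0 (add_ribbon lam k) r.
Proof.
have met_n : nth 0 mu n <= nth 0 lam n by rewrite mu_nth0.
case: (ex_minnP (ex_intro (fun r => nth 0 mu r <= nth 0 lam r) n met_n)) => k met_k k_min.
have le_kn := k_min n met_n.
have met_ge d : k + d <= n -> nth 0 mu (k + d) <= nth 0 lam (k + d).
  elim: d => [|d IHd] le_d; first by rewrite addn0 met_k.
  by rewrite addnS; apply: (proj2 (ribbon_addition_row_step _ _)); [lia | apply: IHd; lia].
exists k => // r; rewrite nth_add_ribbon; case: (ltnP r k) => [lt_rk|le_kr].
  have := ribbon_addition_row_le (leq_trans lt_rk le_kn).
  by have := contra (k_min r); rewrite -!ltnNge => /(_ lt_rk); lia.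
case: (ltnP r n) => [lt_rn|le_nr]; last by rewrite mu_nth0 ?lam_nth0 //; lia.
apply: (proj1 (ribbon_addition_row_step lt_rn _)).
by rewrite -(subnKC le_kr); apply: met_ge; lia.
Qed.

End RibbonAddition.

Theorem mainTheorem2 (n : nat) (lam : seq nat) (i : nat) :
  dyck_shape n lam -> 1 <= i <= n.+1 ->
  exists! mu : seq nat,
    [/\ dyck_shape n.+1 mu, ribbon_addition n lam mu
      & sw_ne_diagonals_met n.+1 (ribbon_cells n lam mu) = i].
Proof.
move=> dyck_lam /andP[i_gt0 le_i].
have le_kn : n.+1 - i <= n by lia.
exists (add_ribbon lam (n.+1 - i)); split.
  split; [exact: add_ribbon_dyck | exact: add_ribbon_ribbon |].
  by rewrite sw_ne_diagonals_met_add_ribbon //; lia.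
move=> mu [dyck_mu ribbon_mu diag_mu].
have [k le_k mu_k] := ribbon_addition_add_ribbon dyck_lam dyck_mu ribbon_mu.
have mu_eq := dyck_shape_eq dyck_mu (add_ribbon_dyck dyck_lam le_k) mu_k.
move: diag_mu; rewrite mu_eq sw_ne_diagonals_met_add_ribbon // => diag_k.
by rewrite (_ : k = n.+1 - i) //; lia.
Qed.
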